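(* Let $k$ and $r$ be positive integers, let $G$ be a graph with $\chi(G)\le r$, and let $P\subset V(G)$. Suppose $|\mathcal{D}_G(P,3)|\le \frac{1}{2}k(k+1)$. Then for each precoloring $d\colon P\to[r+1]$ of $P$ in $G$, there exists a proper coloring $f\colon V(G)\to[r+k]$ of $G$ with $f(u)=d(u)$ for each $u\in P$.
   Context: For a graph $G$, $P\subset V(G)$ and a positive integer $k$, $\mathcal{D}_G(P,k)=\{\{x,y\}\subset P: x\ne y,\ d_G(x,y)\le k\}$, where $d_G$ is the distance in $G$. For a positive integer $m$, $[m]=\{1,\dots,m\}$. A precoloring of $P$ in $G$ is a proper coloring of the induced subgraph $G[P]$. *)

From mathcomp Require Import all_boot.
Set Implicit Arguments. Unset Strict Implicit. Unset Printing Implicit Defensive.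

Definition simple_graph (T : finType) (e : rel T) : Prop :=
  symmetric e /\ irreflexive e.

Definition dist_le (T : finType) (e : rel T) (k : nat) (x y : T) : bool :=
  [exists n : 'I_k.+1, exists s : n.-tuple T, path e x s && (last x s == y)].

Definition Dpairs (T : finType) (e : rel T) (P : {set T}) (k : nat)
  : {set {set T}} :=
  [set S : {set T} | [&& S \subset P, #|S| == 2 &
     [forall x in S, forall y in S, dist_le e k x y]]].

Definition proper_on (T : finType) (e : rel T) (A : {set T}) (m : nat)
  (f : T -> nat) : Prop :=
  (forall x, x \in A -> 1 <= f x <= m) /\
  (forall x y, x \in A -> y \in A -> e x y -> f x != f y).

Definition proper_coloring (T : finType) (e : rel T) (m : nat) (f : T -> nat) :=
  proper_on e [set: T] m f.

Definition chi_le (T : finType) (e : rel T) (r : nat) : Prop :=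
  exists f : T -> nat, proper_coloring e r f.

From mathcomp Require Import all_boot zify.
Set Implicit Arguments. Unset Strict Implicit. Unset Printing Implicit Defensive.

(* Call two vertices of P close when they are at distance at most 3.  A set I
   of precoloured vertices with no close pair (other than pairs precoloured
   with the new top colour) is absorbed at the cost of one new colour:
   recolour I by d and move every neighbour v of some p in I with f v = d p
   to the new colour; two adjacent moved vertices would witness a close pair
   of I, so the result is proper.  With k + 1 new colours and
   at most (k+1)(k+2)/2 close pairs, either some p lies in more than k close
   pairs, and then P minus p has at most k(k+1)/2 of them, is handled by
   induction, and {p} is absorbed; or the closeness graph on P has maximum
   degree at most k and greedily splits into k + 1 absorbable layers.  For
   k = 1 there is at most one close pair {x, y}: if d x <= r, swap two colours
   of an r-colouring so that x gets d x and absorb the rest of P; otherwise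
   d x = d y = r + 1 and all of P is absorbed at once. *)

Definition close (T : finType) (e : rel T) (k : nat) : rel T :=
  fun x y => [&& x != y, dist_le e k x y & dist_le e k y x].

Section Distance.

Variables (T : finType) (e : rel T).

Lemma dist_le_path k x (s : seq T) :
  size s <= k -> path e x s -> dist_le e k x (last x s).
Proof.
move=> sk es; apply/existsP; exists (Ordinal (sk : size s < k.+1)).
by apply/existsP; exists (in_tuple s); rewrite es eqxx.
Qed.

Lemma dist_le_refl k x : dist_le e k x x.
Proof. exact: (@dist_le_path k x [::]). Qed.

Lemma dist_le_sym k x y : symmetric e -> dist_le e k x y -> dist_le e k y x.
Proof.
move=> esym /existsP[n /existsP[s /andP[es /eqP <-]]].
rewrite {2}(_ : x = last (last x s) (rev (belast x s))); last first.
  by rewrite -(last_cons x) -rev_rcons -lastI rev_cons last_rcons.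
apply: dist_le_path; first by rewrite size_rev size_belast size_tuple -ltnS.
by rewrite rev_path (eq_path (e' := e)).
Qed.

Lemma close_path k x (s : seq T) : symmetric e ->
  size s <= k -> path e x s -> x != last x s -> close e k x (last x s).
Proof.
move=> esym sk es xs; have dxs := dist_le_path sk es.
by rewrite /close xs dxs dist_le_sym.
Qed.

Lemma close_sym k : symmetric (close e k).
Proof. by move=> x y; rewrite /close eq_sym [dist_le e k x y && _]andbC. Qed.

Lemma close_irr k : irreflexive (close e k).
Proof. by move=> x; rewrite /close eqxx. Qed.

Lemma close_Dpairs k (A : {set T}) x y :
  x \in A -> y \in A -> close e k x y -> [set x; y] \in Dpairs e A k.
Proof.
move=> xA yA /and3P[xy dxy dyx].
rewrite inE cards2 xy /=; apply/andP; split.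
  by apply/subsetP => z /set2P[]->.
apply/forallP => a; apply/implyP => /set2P[]->; apply/forallP => b;
  by apply/implyP => /set2P[]->; rewrite ?dist_le_refl.
Qed.

Lemma card_close_le_deg k (A : {set T}) x : x \in A ->
  #|[set y in A | close e k x y]| <= #|[set S in Dpairs e A k | x \in S]|.
Proof.
move=> xA; rewrite -(@card_in_imset _ _ (fun y => [set x; y])).
  apply: subset_leq_card; apply/subsetP => S /imsetP[y].
  by rewrite inE => /andP[yA cxy] ->; rewrite inE close_Dpairs // set21.
move=> y z; rewrite !inE => /andP[_ cxy] _ Exy.
have /set2P[yx|//] : y \in [set x; z] by rewrite -Exy set22.
by move: cxy; rewrite yx close_irr.
Qed.

Lemma card_Dpairs_setD1 k (A : {set T}) p :
  #|Dpairs e (A :\ p) k| + #|[set S in Dpairs e A k | p \in S]|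
    <= #|Dpairs e A k|.
Proof.
set Dp := [set S in _ | _].
have DpD : Dp \subset Dpairs e A k.
  by apply/subsetP => S; rewrite inE => /andP[].
suff sub : Dpairs e (A :\ p) k \subset Dpairs e A k :\: Dp.
  have := subset_leq_card DpD; have := subset_leq_card sub.
  by rewrite cardsD (setIidPr DpD); lia.
apply/subsetP => S; rewrite !inE => /andP[SA ->].
have pS : p \notin S by apply/negP => /(subsetP SA); rewrite !inE eqxx.
by rewrite (negbTE pS) (subset_trans SA (subsetDl _ _)).
Qed.

End Distance.

Lemma bounded_degree_coloring (T : finType) (h : rel T) k (A : {set T}) :
  symmetric h -> irreflexive h ->
  (forall x, x \in A -> #|[set y in A | h x y]| <= k) ->
  exists L : T -> 'I_k.+1, {in A &, forall x y, h x y -> L x != L y}.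
Proof.
move=> hsym hirr hdeg.
suff: forall n (B : {set T}), #|B| <= n -> B \subset A ->
    exists L : T -> 'I_k.+1, {in B &, forall x y, h x y -> L x != L y}.
  by move/(_ #|A| A (leqnn _) (subxx _)).
elim=> [|n IH] B Bn BA.
  move: Bn; rewrite leqn0 cards_eq0 => /eqP->.
  by exists (fun=> ord0) => x; rewrite inE.
have [->|[x xB]] := set_0Vmem B; first by exists (fun=> ord0) => y; rewrite inE.
have [||L HL] := IH (B :\ x).
- by move: Bn; rewrite (cardsD1 x B) xB.
- exact: subset_trans (subsetDl _ _) BA.
pose used := [set L y | y in [set y in A | h x y]].
have [c cfree] : exists c, c \notin used.
  apply/existsP; rewrite -negb_forall; apply/negP => /forallP all_used.
  have : #|'I_k.+1| <= #|used|.
    rewrite -cardsT subset_leq_card //.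
    by apply/subsetP => c _; apply: all_used.
  rewrite card_ord ltnNge (leq_trans (leq_imset_card _ _)) //.
  exact: hdeg (subsetP BA x xB).
have c_ok y : y \in B -> h x y -> c != L y.
  move=> yB hxy; apply: contraNneq cfree => ->.
  by rewrite imset_f // inE (subsetP BA y yB) hxy.
exists (fun y => if y == x then c else L y) => y z yB zB hyz.
case: (eqVneq y x) => [yx|yx]; case: (eqVneq z x) => [zx|zx].
- by move: hyz; rewrite yx zx hirr.
- by apply: c_ok; rewrite // -yx.
- by rewrite eq_sym; apply: c_ok; rewrite // -zx hsym.
- by apply: HL; rewrite ?in_setD1 ?yx ?zx.
Qed.

Definition swap_nat (a b v : nat) : nat :=
  if v == a then b else if v == b then a else v.

Lemma swap_nat_inj a b : injective (swap_nat a b).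
Proof.
rewrite /swap_nat => u v; case: (eqVneq u a); case: (eqVneq v a);
  case: (eqVneq u b); case: (eqVneq v b); lia.
Qed.

Lemma proper_coloring_swap (T : finType) (e : rel T) r (c : T -> nat) a b :
  proper_coloring e r c -> 1 <= a <= r -> 1 <= b <= r ->
  proper_coloring e r (swap_nat a b \o c).
Proof.
move=> [cR cE] aR bR; split=> [v _ | u v _ _ euv] /=.
  by rewrite /swap_nat; do 2?case: ifP => _; rewrite ?cR.
by rewrite (inj_eq (@swap_nat_inj a b)) cE.
Qed.

Section Extension.

Variables (T : finType) (e : rel T).
Hypothesis esym : symmetric e.
Variables (P : {set T}) (r : nat) (d : T -> nat).
Hypothesis dP : proper_on e P (r + 1) d.

Lemma extend_scattered N (S I : {set T}) (f : T -> nat) :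
  r <= N -> S \subset P -> I \subset P ->
  proper_coloring e N f -> {in S, f =1 d} ->
  {in I &, forall p q, close e 3 p q -> d p = N.+1} ->
  exists g, proper_coloring e N.+1 g /\ {in S :|: I, g =1 d}.
Proof.
move=> rN SP IP [fR fE] fS Iscat.
have fN v : f v <= N by have /andP[] := fR v (in_setT v).
have dN u : u \in P -> 1 <= d u <= N.+1.
  by move=> /dP.1; rewrite addn1; case/andP=> -> /leq_trans->.
pose moved v := [exists p in I, e v p && (f v == d p)].
have movedP v : reflect (exists2 p, p \in I & e v p /\ f v = d p) (moved v).
  by apply: (iffP exists_inP) => [[p pI /andP[evp /eqP]]|[p pI [evp ->]]];
    exists p; rewrite ?evp ?eqxx.
have d_top p v : p \in I -> f v = d p -> d p != N.+1.
  by move=> _ <-; rewrite neq_ltn ltnS fN.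
exists (fun v => if v \in I then d v else if moved v then N.+1 else f v).
have edge_leaving_I x y : x \in I -> y \notin I -> e x y ->
    d x != (if moved y then N.+1 else f y).
  move=> xI yI exy; case: ifPn => [/movedP[p pI [eyp fyp]] | unmoved].
    apply/eqP => dxN; suff dpN : d p = N.+1.
      by have := d_top p y pI fyp; rewrite dpN eqxx.
    case: (eqVneq x p) => [<- //|xp]; apply: (Iscat p x) => //.
    apply: (close_path (s := [:: y; x])) => //=; last by rewrite eq_sym.
    by rewrite esym eyp esym exy.
  apply: contraNneq unmoved => dxf; apply/movedP.
  by exists x => //; split; [rewrite esym | rewrite dxf].
split; [split|].
- move=> x _; case: ifP => [/(subsetP IP)/dN //|_].
  case: ifP => _; rewrite ?leqnn //.
  by case/andP: (fR x (in_setT x)) => -> /leqW.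
- move=> x y _ _ exy.
  case xI: (x \in I); case yI: (y \in I).
  + exact: dP.2 (subsetP IP x xI) (subsetP IP y yI) exy.
  + by apply: edge_leaving_I; rewrite ?yI.
  + by rewrite eq_sym; apply: edge_leaving_I; rewrite ?xI // esym.
  + case: ifPn => [/movedP[p pI [exp fxp]]|_];
      case: ifPn => [/movedP[q qI [eyq fyq]]|_].
    * case: (eqVneq p q) => [pq|pq].
        by have := fE x y (in_setT x) (in_setT y) exy; rewrite fxp fyq pq eqxx.
      have := d_top p x pI fxp; rewrite (Iscat p q) ?eqxx //.
      apply: (close_path (s := [:: x; y; q])) => //=.
      by rewrite esym exp exy eyq.
    * by rewrite neq_ltn ltnS fN orbT.
    * by rewrite neq_ltn ltnS fN.
    * exact: fE.
- move=> u; rewrite in_setU => /orP[uS|->] //.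
  case: ifP => // _; case: ifPn => [/movedP[p pI [eup fup]]|_]; last exact: fS.
  have := dP.2 u p (subsetP SP u uS) (subsetP IP p pI) eup.
  by rewrite -fup fS ?eqxx.
Qed.

Lemma extend_by_layers k (A : {set T}) (c : T -> nat) (L : T -> 'I_k) :
  A \subset P -> proper_coloring e r c ->
  {in A &, forall x y, close e 3 x y -> L x != L y} ->
  exists g, proper_coloring e (r + k) g /\ {in A, g =1 d}.
Proof.
move=> AP cc Lcol.
suff /(_ k) [g [gc gd]] : forall j, exists g, proper_coloring e (r + j) g /\
    {in [set x in A | L x < j], g =1 d}.
  by exists g; split=> // u uA; apply: gd; rewrite inE uA ltn_ord.
elim=> [|j [g [gc gd]]].
  by exists c; rewrite addn0; split=> // u; rewrite inE ltn0 andbF.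
have [|||g' [g'c g'd]] := @extend_scattered (r + j) [set x in A | L x < j]
    [set x in A | L x == j :> nat] g (leq_addr _ _) _ _ gc gd.
- by apply/subsetP => x; rewrite inE => /andP[/(subsetP AP)].
- by apply/subsetP => x; rewrite inE => /andP[/(subsetP AP)].
- move=> x y; rewrite !inE => /andP[xA Lx] /andP[yA Ly] cxy.
  by move: (Lcol x y xA yA cxy); rewrite -val_eqE /= (eqP Lx) (eqP Ly) eqxx.
exists g'; rewrite addnS; split=> // u.
rewrite inE ltnS leq_eqVlt => /andP[uA /orP[Lu|Lu]]; apply: g'd;
  by rewrite !inE uA Lu ?orbT.
Qed.

Lemma extend_one_pair (A : {set T}) (c : T -> nat) :
  A \subset P -> proper_coloring e r c -> #|Dpairs e A 3| <= 1 ->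
  exists g, proper_coloring e (r + 1) g /\ {in A, g =1 d}.
Proof.
move=> AP cc D1; rewrite addn1.
have dR u : u \in P -> 1 <= d u <= r.+1 by move/dP.1; rewrite addn1.
pose low_pair := [exists x in A, exists y in A, close e 3 x y && (d x <= r)].
case: (boolP low_pair) => [|no_low].
  case/exists_inP=> x xA /exists_inP[y yA /andP[cxy dxr]].
  have dxR : 1 <= d x <= r by case/andP: (dR x (subsetP AP x xA)) => ->.
  have c'c := proper_coloring_swap cc (cc.1 x (in_setT x)) dxR.
  have [||||g [gc gd]] :=
    @extend_scattered r [set x] (A :\ x) _ (leqnn r) _ _ c'c.
  - by rewrite sub1set (subsetP AP).
  - exact: subset_trans (subsetDl _ _) AP.
  - by move=> u /set1P->; rewrite /= /swap_nat eqxx.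
  - move=> u v; rewrite !in_setD1 => /andP[ux uA] /andP[vx vA] cuv.
    have /setP/(_ x) := card_le1_eqP D1 _ _
      (close_Dpairs uA vA cuv) (close_Dpairs xA yA cxy).
    by rewrite !inE eqxx /= eq_sym (negbTE ux) eq_sym (negbTE vx).
  by exists g; split=> // u uA; apply: gd; rewrite setD1K.
have [||g [gc gd]] := @extend_scattered r set0 A c (leqnn r) (sub0set _) AP cc.
- by move=> u; rewrite inE.
- move=> p q pA qA cpq; have := dR p (subsetP AP p pA).
  case: (leqP (d p) r) => [dpr|]; last by lia.
  case/exists_inP: no_low; exists p => //.
  by apply/exists_inP; exists q; rewrite ?cpq.
by exists g; split=> // u uA; apply: gd; rewrite set0U.
Qed.

Lemma extend_precoloring k (A : {set T}) (c : T -> nat) :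
  0 < k -> A \subset P -> proper_coloring e r c ->
  2 * #|Dpairs e A 3| <= k * (k + 1) ->
  exists g, proper_coloring e (r + k) g /\ {in A, g =1 d}.
Proof.
move=> + + cc; elim: k A => // k IH A _ AP DA.
have [k0|kpos] := posnP k.
  by subst k; apply: extend_one_pair AP cc _; lia.
pose deg p := #|[set S in Dpairs e A 3 | p \in S]|.
case: (boolP [exists p in A, k < deg p]) => [/exists_inP[p pA dp]|low_deg].
  have [||g [gc gd]] := IH (A :\ p) kpos.
  - exact: subset_trans (subsetDl _ _) AP.
  - by move: dp DA (card_Dpairs_setD1 e 3 A p); rewrite /deg; nia.
  have [||g' [g'c g'd]] := @extend_scattered (r + k) (A :\ p) [set p] g
    (leq_addr k r) (subset_trans (subsetDl _ _) AP) _ gc gd.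
  - by rewrite sub1set (subsetP AP).
  - by move=> u v /set1P-> /set1P->; rewrite close_irr.
  exists g'; rewrite addnS; split=> // u uA.
  by apply: g'd; rewrite setUC setD1K.
have [|L Lcol] :=
  @bounded_degree_coloring _ (close e 3) k A (close_sym e 3) (close_irr e 3).
  move=> x xA; apply: leq_trans (card_close_le_deg e 3 xA) _; rewrite leqNgt.
  by apply: contra low_deg => dx; apply/exists_inP; exists x.
exact: extend_by_layers AP cc Lcol.
Qed.

End Extension.

Theorem theorem1 (T : finType) (e : rel T) (k r : nat) (P : {set T}) :
  simple_graph e -> 0 < k -> 0 < r -> chi_le e r ->
  2 * #|Dpairs e P 3| <= k * (k + 1) ->
  forall d : T -> nat, proper_on e P (r + 1) d ->
  exists f : T -> nat, proper_coloring e (r + k) f /\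
    (forall u, u \in P -> f u = d u).
Proof.
move=> [esym _] k_gt0 _ [c cc] Dk d dP.
have [f [fc fd]] := extend_precoloring esym dP k_gt0 (subxx P) cc Dk.
by exists f.
Qed.
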